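(* Let $A$ be a real reduced multiring. Define a ternary relation $D$ on $A$ by $d\in D(a,b)$ iff $d\in d^2a+d^2b$. Then $(A,\cdot,1,0,-1,D)$ is a real semigroup, and its transversal representation satisfies $D^t(a,b)=a+b$ for all $a,b\in A$.
   Context: A multiring is a tuple $(R,+,\cdot,-,0,1)$ with $+:R\times R\to\mathcal P(R)\setminus\{\emptyset\}$ satisfying: $z\in x+y\Rightarrow x\in z+(-y)$ and $y\in(-x)+z$; $y\in0+x\iff y=x$; $(x+y)+z=x+(y+z)$ (with $Z+w=\bigcup_{z\in Z}(z+w)$); $x+y=y+x$; $(R,\cdot,1)$ a commutative monoid; $a0=0$; $c\in a+b\Rightarrow cd\in ad+bd$. A multiring $A$ is real reduced if $1\ne0$ and for all $a,b,c,d$: $a^3=a$; $c\in a+ab^2\Rightarrow c=a$; $c,d\in a^2+b^2\Rightarrow c=d$. In $A$, $-1$ denotes $-(1)$. A ternary semigroup is $(S,\cdot,1,0,-1)$ with: $(S,\cdot,1)$ a commutative semigroup with unity; $x^3=x$; $-1\ne1$, $(-1)(-1)=1$; $x0=0$; $x=(-1)x\Rightarrow x=0$. A real semigroup is a ternary semigroup with a ternary relation $D$, where $a\in D^t(b,c)$ means $a\in D(b,c)$, $-b\in D(-a,c)$ and $-c\in D(b,-a)$ (with $-x=(-1)x$), satisfying: (RS0) $c\in D(a,b)\iff c\in D(b,a)$; (RS1) $a\in D(a,b)$; (RS2) $a\in D(b,c)\Rightarrow ad\in D(bd,cd)$; (RS3) $a\in D^t(b,c)$, $c\in D^t(d,e)\Rightarrow\exists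 x\in D^t(b,d)$ with $a\in D^t(x,e)$; (RS4) $e\in D(c^2a,d^2b)\Rightarrow e\in D(a,b)$; (RS5) $ad=bd$, $ae=be$, $c\in D(d,e)\Rightarrow ac=bc$; (RS6) $c\in D(a,b)\Rightarrow c\in D^t(c^2a,c^2b)$; (RS7) $D^t(a,-b)\cap D^t(b,-a)\ne\emptyset\Rightarrow a=b$; (RS8) $a\in D(b,c)\Rightarrow a^2\in D(b^2,c^2)$. *)

Set Implicit Arguments.

(* A multiring on a carrier T: [add x y z] means z \in x + y. *)
Record is_multiring (T : Type) (add : T -> T -> T -> Prop) (mul : T -> T -> T)
    (neg : T -> T) (zero one : T) : Prop := {
  mr_add_nonempty : forall x y, exists z, add x y z;
  mr_rev1 : forall x y z, add x y z -> add z (neg y) x;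
  mr_rev2 : forall x y z, add x y z -> add (neg x) z y;
  mr_zero : forall x y, add zero x y <-> y = x;
  mr_assoc : forall x y z w,
      (exists t, add x y t /\ add t z w) <-> (exists t, add y z t /\ add x t w);
  mr_comm : forall x y z, add x y z <-> add y x z;
  mr_mulA : forall x y z, mul x (mul y z) = mul (mul x y) z;
  mr_mulC : forall x y, mul x y = mul y x;
  mr_mul1 : forall x, mul one x = x;
  mr_mul0 : forall a, mul a zero = zero;
  mr_distr : forall a b c d, add a b c -> add (mul a d) (mul b d) (mul c d)
}.

Record is_real_reduced_multiring (T : Type) (add : T -> T -> T -> Prop)
    (mul : T -> T -> T) (neg : T -> T) (zero one : T) : Prop := {
  rr_multiring : @is_multiring T add mul neg zero one;
  rr_one_neq_zero : one <> zero;
  rr_cube : forall a, mul a (mul a a) = a;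
  rr_ax2 : forall a b c, add a (mul a (mul b b)) c -> c = a;
  rr_ax3 : forall a b c d, add (mul a a) (mul b b) c -> add (mul a a) (mul b b) d -> c = d
}.

(* Ternary semigroup (S, ., 1, 0, -1); [m1] is the distinguished element -1. *)
Record is_ternary_semigroup (S : Type) (mul : S -> S -> S) (one zero m1 : S) : Prop := {
  ts_mulA : forall x y z, mul x (mul y z) = mul (mul x y) z;
  ts_mulC : forall x y, mul x y = mul y x;
  ts_mul1 : forall x, mul one x = x;
  ts_cube : forall x, mul x (mul x x) = x;
  ts_m1_neq_one : m1 <> one;
  ts_m1m1 : mul m1 m1 = one;
  ts_mul0 : forall x, mul x zero = zero;
  ts_fix_m1 : forall x, x = mul m1 x -> x = zero
}.

(* [D b c a] means a \in D(b,c).  -x is (-1)x. *)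
Definition Dt (S : Type) (mul : S -> S -> S) (m1 : S) (D : S -> S -> S -> Prop)
    (b c a : S) : Prop :=
  D b c a /\ D (mul m1 a) c (mul m1 b) /\ D b (mul m1 a) (mul m1 c).

Record is_real_semigroup (S : Type) (mul : S -> S -> S) (one zero m1 : S)
    (D : S -> S -> S -> Prop) : Prop := {
  rs_ternary : @is_ternary_semigroup S mul one zero m1;
  RS0 : forall a b c, D a b c <-> D b a c;
  RS1 : forall a b, D a b a;
  RS2 : forall a b c d, D b c a -> D (mul b d) (mul c d) (mul a d);
  RS3 : forall a b c d e, Dt mul m1 D b c a -> Dt mul m1 D d e c ->
        exists x, Dt mul m1 D b d x /\ Dt mul m1 D x e a;
  RS4 : forall a b c d e, D (mul (mul c c) a) (mul (mul d d) b) e -> D a b e;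
  RS5 : forall a b c d e, mul a d = mul b d -> mul a e = mul b e -> D d e c ->
        mul a c = mul b c;
  RS6 : forall a b c, D a b c -> Dt mul m1 D (mul (mul c c) a) (mul (mul c c) b) c;
  RS7 : forall a b, (exists x, Dt mul m1 D a (mul m1 b) x /\ Dt mul m1 D b (mul m1 a) x) ->
        a = b;
  RS8 : forall a b c, D b c a -> D (mul b b) (mul c c) (mul a a)
}.

(** Two facts about a real reduced multiring drive everything.  First, for
    every a, b the sum a^2 + b^2 contains an idempotent f with f a = a and
    f b = b.  Second, for an idempotent g the multivalued difference g - g is
    exactly the set of elements fixed by g, and it is closed under addition;
    so whenever d lies in d^2 a + d^2 b, the idempotent f of a and b fixes d.
    With the absorption law a + a b^2 = {a} this identifies D^t(a, b) with
    a + b: from the three D-memberships one gets a^2 d in a + a^2 b and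
    b^2 d in b + b^2 a, and regrouping f d in a^2 d + b^2 d yields
    d = f d in (a + b^2 a) + (b + a^2 b) = a + b. *)

From Stdlib Require Import List Arith.
Import ListNotations.

Set Implicit Arguments.

Section CubeMonoidNormalization.

Variables (M : Type) (mul : M -> M -> M) (neg : M -> M) (zero one : M).
Hypotheses (mulA : forall x y z, mul x (mul y z) = mul (mul x y) z)
  (mulC : forall x y, mul x y = mul y x)
  (mul1 : forall x, mul one x = x)
  (mul0 : forall x, mul x zero = zero)
  (mul_cube : forall x, mul x (mul x x) = x)
  (negE : forall x, neg x = mul (neg one) x)
  (neg_one_sqr : mul (neg one) (neg one) = one).

Inductive mexpr : Type :=
  | MVar (n : nat) | MOne | MZero | MNeg (t : mexpr) | MMul (t u : mexpr).

Fixpoint meval (env : list M) (t : mexpr) : M :=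
  match t with
  | MVar n => nth n env one
  | MOne => one
  | MZero => zero
  | MNeg t => neg (meval env t)
  | MMul t u => mul (meval env t) (meval env u)
  end.

(* Either zero, or a sign times the monomial whose i-th exponent is the
   i-th entry of [mnf_exps], the variables being numbered as in [env]. *)
Record mnf := MNF { mnf_zero : bool; mnf_sign : bool; mnf_exps : list nat }.

Fixpoint exps_add (l1 l2 : list nat) : list nat :=
  match l1, l2 with
  | [], _ => l2
  | _, [] => l1
  | e :: l1', f :: l2' => (e + f) :: exps_add l1' l2'
  end.

Fixpoint exps_var (n : nat) : list nat :=
  match n with 0 => [1] | S n => 0 :: exps_var n end.

Fixpoint mnormalize (t : mexpr) : mnf :=
  match t with
  | MVar n => MNF false false (exps_var n)
  | MOne => MNF false false []
  | MZero => MNF true false []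
  | MNeg t => let r := mnormalize t in MNF (mnf_zero r) (negb (mnf_sign r)) (mnf_exps r)
  | MMul t u =>
      let r := mnormalize t in let s := mnormalize u in
      MNF (mnf_zero r || mnf_zero s) (xorb (mnf_sign r) (mnf_sign s))
          (exps_add (mnf_exps r) (mnf_exps s))
  end.

Fixpoint mpow (x : M) (e : nat) : M :=
  match e with 0 => one | S e => mul x (mpow x e) end.

Fixpoint mono_eval (env : list M) (l : list nat) : M :=
  match l with
  | [] => one
  | e :: l => mul (mpow (hd one env) e) (mono_eval (tl env) l)
  end.

Definition sign_eval (s : bool) : M := if s then neg one else one.

Definition mnf_eval (env : list M) (r : mnf) : M :=
  if mnf_zero r then zero else mul (sign_eval (mnf_sign r)) (mono_eval env (mnf_exps r)).

Lemma mulr1 x : mul x one = x.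
Proof. rewrite mulC; apply mul1. Qed.

Lemma mulACA a b c d : mul (mul a b) (mul c d) = mul (mul a c) (mul b d).
Proof. rewrite <- !mulA; f_equal; rewrite !mulA; f_equal; apply mulC. Qed.

Lemma mpow_add x e f : mpow x (e + f) = mul (mpow x e) (mpow x f).
Proof.
  induction e as [|e IH]; simpl.
  - symmetry; apply mul1.
  - rewrite IH; apply mulA.
Qed.

Lemma mono_eval_add env l1 l2 :
  mono_eval env (exps_add l1 l2) = mul (mono_eval env l1) (mono_eval env l2).
Proof.
  revert l2 env; induction l1 as [|e l1 IH]; intros [|f l2] env; simpl.
  - symmetry; apply mul1.
  - symmetry; apply mul1.
  - symmetry; apply mulr1.
  - rewrite mpow_add, IH; apply mulACA.
Qed.

Lemma mono_eval_var env n : mono_eval env (exps_var n) = nth n env one.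
Proof.
  revert env; induction n as [|n IH]; intros [|x env]; simpl;
    rewrite ?mulr1, ?mul1, ?IH; try reflexivity.
  destruct n; reflexivity.
Qed.

Lemma sign_eval_xorb s1 s2 : mul (sign_eval s1) (sign_eval s2) = sign_eval (xorb s1 s2).
Proof. destruct s1, s2; simpl; rewrite ?mul1, ?mulr1, ?neg_one_sqr; reflexivity. Qed.

Lemma mnormalize_sound env t : meval env t = mnf_eval env (mnormalize t).
Proof.
  unfold mnf_eval; induction t as [n| | |t IH|t IHt u IHu]; simpl.
  - rewrite mul1, mono_eval_var; reflexivity.
  - symmetry; apply mul1.
  - reflexivity.
  - rewrite IH, negE; destruct (mnf_zero (mnormalize t)).
    + apply mul0.
    + rewrite mulA; destruct (mnf_sign (mnormalize t)); simpl;
        rewrite ?neg_one_sqr, ?mulr1; reflexivity.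
  - rewrite IHt, IHu.
    destruct (mnf_zero (mnormalize t)); simpl; [rewrite mulC; apply mul0|].
    destruct (mnf_zero (mnormalize u)); simpl; [apply mul0|].
    rewrite mono_eval_add, mulACA, sign_eval_xorb; reflexivity.
Qed.

(* Since x^3 = x, only the class of an exponent in {0}, {1, 3, ...},
   {2, 4, ...} matters. *)
Fixpoint exp_red (e : nat) : nat :=
  match e with S (S (S _ as e')) => exp_red e' | _ => e end.

Lemma mpow_SSS x e : mpow x (S (S (S e))) = mpow x (S e).
Proof. simpl; rewrite !mulA, <- (mulA x x x), mul_cube; reflexivity. Qed.

Lemma mpow_exp_red x e : mpow x (exp_red e) = mpow x e.
Proof.
  enough (H : forall n, mpow x (exp_red n) = mpow x n /\
                        mpow x (exp_red (S n)) = mpow x (S n)) by apply (H e).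
  intro n; induction n as [|n [IH1 IH2]]; [split; reflexivity|]; split; [exact IH2|].
  destruct n as [|n]; [reflexivity|].
  change (mpow x (exp_red (S (S (S n))))) with (mpow x (exp_red (S n))).
  rewrite mpow_SSS; exact IH1.
Qed.

Fixpoint exps_eqb (l1 l2 : list nat) : bool :=
  match l1, l2 with
  | [], _ => forallb (Nat.eqb 0) l2
  | _, [] => forallb (Nat.eqb 0) l1
  | e :: l1', f :: l2' => Nat.eqb (exp_red e) (exp_red f) && exps_eqb l1' l2'
  end.

Lemma mono_eval_zeros env l : forallb (Nat.eqb 0) l = true -> mono_eval env l = one.
Proof.
  revert env; induction l as [|e l IH]; intros env h; simpl in *; [reflexivity|].
  apply andb_prop in h as [h0 h]; destruct e; [|discriminate].
  rewrite IH by exact h; apply mul1.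
Qed.

Lemma exps_eqb_sound env l1 l2 :
  exps_eqb l1 l2 = true -> mono_eval env l1 = mono_eval env l2.
Proof.
  revert l2 env; induction l1 as [|e l1 IH]; intros [|f l2] env h.
  - reflexivity.
  - change (forallb (Nat.eqb 0) (f :: l2) = true) in h.
    rewrite (mono_eval_zeros env _ h); reflexivity.
  - change (forallb (Nat.eqb 0) (e :: l1) = true) in h.
    rewrite (mono_eval_zeros env _ h); reflexivity.
  - simpl in h |- *; apply andb_prop in h as [he h]; apply Nat.eqb_eq in he.
    rewrite <- (mpow_exp_red _ e), he, mpow_exp_red, (IH l2 _ h); reflexivity.
Qed.

Definition mnf_eqb (r s : mnf) : bool :=
  if mnf_zero r then mnf_zero s
  else negb (mnf_zero s) && Bool.eqb (mnf_sign r) (mnf_sign s)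
       && exps_eqb (mnf_exps r) (mnf_exps s).

Lemma meval_eq_of_mnf_eqb env t u :
  mnf_eqb (mnormalize t) (mnormalize u) = true -> meval env t = meval env u.
Proof.
  rewrite !mnormalize_sound; unfold mnf_eqb, mnf_eval.
  destruct (mnf_zero (mnormalize t)), (mnf_zero (mnormalize u)); simpl;
    intro h; try discriminate; try reflexivity.
  apply andb_prop in h as [hs h]; apply Bool.eqb_prop in hs.
  rewrite hs, (exps_eqb_sound env _ _ h); reflexivity.
Qed.

End CubeMonoidNormalization.

Section Multiring.

Variables (A : Type) (add : A -> A -> A -> Prop) (mul : A -> A -> A)
  (neg : A -> A) (zero one : A).
Hypothesis HM : is_multiring add mul neg zero one.

Lemma add_congr x y z x' y' z' :
  add x y z -> x = x' -> y = y' -> z = z' -> add x' y' z'.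
Proof. intros h -> -> ->; exact h. Qed.

Lemma add_exists x y : exists z, add x y z.
Proof. exact (mr_add_nonempty HM x y). Qed.

Lemma addC x y z : add x y z -> add y x z.
Proof. apply (mr_comm HM). Qed.

Lemma add_mul a b c d : add a b c -> add (mul a d) (mul b d) (mul c d).
Proof. apply (mr_distr HM). Qed.

Lemma add_rev1 x y z : add x y z -> add z (neg y) x.
Proof. apply (mr_rev1 HM). Qed.

Lemma add_rev2 x y z : add x y z -> add (neg x) z y.
Proof. apply (mr_rev2 HM). Qed.

Lemma add0 x : add zero x x.
Proof. apply (mr_zero HM); reflexivity. Qed.

Lemma add_opp x : add x (neg x) zero.
Proof. exact (add_rev1 (add0 x)). Qed.

Lemma opp_unique x y : add x y zero -> y = neg x.
Proof. intro h; apply (mr_zero HM), addC, add_rev2, h. Qed.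

Lemma oppK x : neg (neg x) = x.
Proof. symmetry; apply opp_unique, addC, add_opp. Qed.

Lemma opp_mul_m1 x : neg x = mul (neg one) x.
Proof.
  symmetry; apply opp_unique.
  pose proof (add_mul x (add_opp one)) as h.
  rewrite (mr_mul1 HM), (mr_mulC HM zero), (mr_mul0 HM) in h; exact h.
Qed.

Lemma m1_sqr : mul (neg one) (neg one) = one.
Proof. rewrite <- opp_mul_m1; apply oppK. Qed.

Lemma add_opp_opp x y z : add x y z -> add (neg x) (neg y) (neg z).
Proof.
  intro h; pose proof (add_mul (neg one) h) as h'.
  rewrite !(mr_mulC HM _ (neg one)), <- !opp_mul_m1 in h'; exact h'.
Qed.

Lemma add_assocl x y z t w :
  add x y t -> add t z w -> exists s, add y z s /\ add x s w.
Proof. intros h1 h2; apply (mr_assoc HM); eauto. Qed.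

Lemma add_assocr x y z s w :
  add y z s -> add x s w -> exists t, add x y t /\ add t z w.
Proof. intros h1 h2; apply (mr_assoc HM); eauto. Qed.

Lemma add_medial x y z w t u v :
  add x y t -> add z w u -> add t u v ->
  exists t' u', add x z t' /\ add y w u' /\ add t' u' v.
Proof.
  intros ht hu hv.
  destruct (add_assocl ht hv) as [s [hs hv']].
  destruct (add_assocr hu hs) as [r [hr hs']].
  destruct (add_assocl (addC hr) hs') as [q [hq hs'']].
  destruct (add_assocr hs'' hv') as [t' [ht' hv'']].
  exists t', q; auto.
Qed.

Section RealReduced.

Hypotheses (mul_cube : forall a, mul a (mul a a) = a)
  (add_absorb : forall a b c, add a (mul a (mul b b)) c -> c = a)
  (add_sqr_single : forall a b c d,
     add (mul a a) (mul b b) c -> add (mul a a) (mul b b) d -> c = d).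

Ltac inList x xs :=
  match xs with [] => false | x :: _ => true | _ :: ?xs => inList x xs end.
Ltac lookup x xs :=
  match xs with x :: _ => O | _ :: ?xs => let n := lookup x xs in constr:(S n) end.
Ltac mvars xs e :=
  match e with
  | mul ?a ?b => let xs := mvars xs a in mvars xs b
  | neg ?a => mvars xs a
  | one => xs
  | zero => xs
  | _ => match inList e xs with true => xs | false => constr:(e :: xs) end
  end.
Ltac mreify xs e :=
  match e with
  | one => constr:(MOne)
  | zero => constr:(MZero)
  | neg ?a => let t := mreify xs a in constr:(MNeg t)
  | mul ?a ?b => let t := mreify xs a in let u := mreify xs b in constr:(MMul t u)
  | _ => let n := lookup e xs in constr:(MVar n)
  end.

Ltac mon_eq :=
  lazymatch goal with |- ?x = ?y =>
    let xs := mvars (@nil A) x in let xs := mvars xs y in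
    let t := mreify xs x in let u := mreify xs y in
    change (meval mul neg zero one xs t = meval mul neg zero one xs u);
    apply (meval_eq_of_mnf_eqb mul neg (mr_mulA HM) (mr_mulC HM) (mr_mul1 HM) (mr_mul0 HM)
             mul_cube opp_mul_m1 m1_sqr);
    vm_compute; reflexivity
  end.

Ltac add_from h := refine (add_congr h _ _ _); mon_eq.

Lemma add_self_eq a t : add a a t -> t = a.
Proof. intro h; apply (add_absorb (a := a) (b := one)); add_from h. Qed.

Lemma add_absorb_mem a b : add a (mul a (mul b b)) a.
Proof.
  destruct (add_exists a (mul a (mul b b))) as [t h].
  pose proof (add_absorb h); subst t; exact h.
Qed.

(* For c in 1 + x, regrouping c^2 in c + c x gives c^2 in (1 + x^2) + (x + x)
   = 1 + x, and then 1 in 1 + c^2 is contained in (1 + 1) + x = 1 + x. *)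
Lemma one_add x : add one x one.
Proof.
  destruct (add_exists one x) as [c hc].
  assert (hcc : add c (mul c x) (mul c c)) by add_from (add_mul c hc).
  assert (hcx : add (mul x x) x (mul c x)) by add_from (addC (add_mul x hc)).
  destruct (add_medial hc hcx hcc) as [t [u [ht [hu hcc']]]].
  assert (t = one) by (apply (add_absorb (a := one) (b := x)); add_from ht); subst t.
  apply add_self_eq in hu; subst u.
  assert (h1 : add one (mul c c) one) by add_from (add_absorb_mem one c).
  destruct (add_assocr hcc' h1) as [s [hs h]].
  apply add_self_eq in hs; subst s; exact h.
Qed.

Lemma add_mul_absorb a x : add a (mul a x) a.
Proof. add_from (add_mul a (one_add x)). Qed.

Lemma one_opp_add y : add one (neg one) y.
Proof.
  pose proof (add_opp_opp (add_rev2 (one_add (neg y)))) as h.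
  rewrite !oppK in h; exact h.
Qed.

Lemma mul_mem_diff g y : add g (neg g) (mul g y).
Proof. add_from (add_mul g (one_opp_add y)). Qed.

Lemma diff_add_closed g p q w :
  add g (neg g) p -> add g (neg g) q -> add p q w -> add g (neg g) w.
Proof.
  intros hp hq hw.
  destruct (add_medial hp hq hw) as [t [u [ht [hu hw']]]].
  apply add_self_eq in ht; apply add_self_eq in hu; subst t u; exact hw'.
Qed.

Lemma mem_diff_fixed g z : mul g g = g -> add g (neg g) z -> mul g z = z.
Proof.
  intros hgg hz.
  assert (hgz : add g (neg g) (mul (neg g) z)).
  { replace (mul (neg g) z) with (mul g (neg z)) by mon_eq; apply mul_mem_diff. }
  pose proof (diff_add_closed (mul_mem_diff g z) hgz (add_mul z hz)) as hzz.
  pose proof (add_rev1 hzz) as hg; rewrite oppK in hg.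
  assert (habs : add (mul z z) (mul (mul z z) (mul g g)) (mul g (mul z z))).
  { rewrite hgg; add_from (add_mul (mul z z) hg). }
  apply add_absorb in habs.
  transitivity (mul (mul g (mul z z)) z); [mon_eq|]; rewrite habs; mon_eq.
Qed.

Lemma fixed_add_closed g u v y :
  mul g g = g -> mul g u = u -> mul g v = v -> add u v y -> mul g y = y.
Proof.
  intros hgg hu hv hy; apply (mem_diff_fixed hgg).
  rewrite <- hu, <- hv in hy.
  exact (diff_add_closed (mul_mem_diff g u) (mul_mem_diff g v) hy).
Qed.

Lemma sqr_join a b : exists f,
  add (mul a a) (mul b b) f /\ mul f f = f /\ mul f a = a /\ mul f b = b.
Proof.
  destruct (add_exists (mul a a) (mul b b)) as [f hf].
  assert (ha : mul f (mul a a) = mul a a).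
  { apply (add_absorb (a := mul a a) (b := b)); add_from (add_mul (mul a a) hf). }
  assert (hb : mul f (mul b b) = mul b b).
  { apply (add_absorb (a := mul b b) (b := a)); add_from (addC (add_mul (mul b b) hf)). }
  exists f; split; [exact hf|split; [|split]].
  - pose proof (add_mul f hf) as h.
    rewrite (mr_mulC HM (mul a a)), (mr_mulC HM (mul b b)), ha, hb in h.
    exact (add_sqr_single h hf).
  - transitivity (mul (mul f (mul a a)) a); [mon_eq|]; rewrite ha; mon_eq.
  - transitivity (mul (mul f (mul b b)) b); [mon_eq|]; rewrite hb; mon_eq.
Qed.

Definition Dsq (a b d : A) : Prop := add (mul (mul d d) a) (mul (mul d d) b) d.

Lemma Dsq_fixed f a b d :
  mul f f = f -> mul f a = a -> mul f b = b -> Dsq a b d -> mul f d = d.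
Proof.
  intros hff hfa hfb hd; apply (fixed_add_closed hff) with (3 := hd).
  - transitivity (mul (mul d d) (mul f a)); [mon_eq|]; rewrite hfa; reflexivity.
  - transitivity (mul (mul d d) (mul f b)); [mon_eq|]; rewrite hfb; reflexivity.
Qed.

Lemma add_sqr_mul_single x d e y y' :
  add (mul (mul d d) x) (mul (mul e e) x) y ->
  add (mul (mul d d) x) (mul (mul e e) x) y' -> y = y'.
Proof.
  intros hy hy'.
  assert (hxy : mul x y = mul x y').
  { apply (add_sqr_single (a := mul x d) (b := mul x e));
      [add_from (add_mul x hy) | add_from (add_mul x hy')]. }
  destruct (sqr_join d e) as [f [_ [hff [hfd hfe]]]].
  (* x^2 f is an idempotent fixing both summands, hence fixing y and y'. *)
  assert (hgg : mul (mul (mul x x) f) (mul (mul x x) f) = mul (mul x x) f).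
  { transitivity (mul (mul (mul x x) (mul x x)) (mul f f)); [mon_eq|].
    rewrite hff; mon_eq. }
  assert (hgd : mul (mul (mul x x) f) (mul (mul d d) x) = mul (mul d d) x).
  { transitivity (mul (mul (mul f d) d) (mul x (mul x x))); [mon_eq|].
    rewrite hfd, mul_cube; reflexivity. }
  assert (hge : mul (mul (mul x x) f) (mul (mul e e) x) = mul (mul e e) x).
  { transitivity (mul (mul (mul f e) e) (mul x (mul x x))); [mon_eq|].
    rewrite hfe, mul_cube; reflexivity. }
  rewrite <- (fixed_add_closed hgg hgd hge hy), <- (fixed_add_closed hgg hgd hge hy').
  transitivity (mul (mul x f) (mul x y)); [mon_eq|]; rewrite hxy; mon_eq.
Qed.

Lemma Dt_Dsq a b d : Dt mul (neg one) Dsq a b d <-> add a b d.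
Proof.
  unfold Dt, Dsq; split.
  - intros [hd [hna hnb]].
    assert (ha : add a (mul (mul a a) b) (mul (mul a a) d))
      by add_from (add_opp_opp (add_rev1 hna)).
    assert (hb : add (mul (mul b b) a) b (mul (mul b b) d))
      by add_from (addC (add_opp_opp (add_rev1 (addC hnb)))).
    destruct (sqr_join a b) as [f [hf [hff [hfa hfb]]]].
    pose proof (add_mul d hf) as hfd; rewrite (Dsq_fixed hff hfa hfb hd) in hfd.
    assert (hfd' : add (mul (mul a a) d) (mul (mul b b) d) d) by add_from hfd.
    destruct (add_medial ha hb hfd') as [t [u [ht [hu h]]]].
    assert (t = a) by (apply (add_absorb (a := a) (b := b)); add_from ht).
    assert (u = b) by (apply (add_absorb (a := b) (b := a)); add_from (addC hu)).
    subst t u; exact h.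
  - intro h; split; [|split].
    + add_from (add_mul (mul d d) h).
    + pose proof (add_opp_opp (add_rev1 h)) as h'; rewrite oppK in h'.
      add_from (add_mul (mul a a) h').
    + pose proof (add_opp_opp (add_rev2 h)) as h'; rewrite oppK in h'.
      add_from (add_mul (mul b b) h').
Qed.

Lemma Dsq_sym a b c : Dsq a b c <-> Dsq b a c.
Proof. split; apply addC. Qed.

Lemma Dsq_refl a b : Dsq a b a.
Proof. add_from (add_mul_absorb a (mul a b)). Qed.

Lemma Dsq_mulr a b c d : Dsq b c a -> Dsq (mul b d) (mul c d) (mul a d).
Proof. intro h; add_from (add_mul d h). Qed.

Lemma Dt_Dsq_assoc a b c d e :
  Dt mul (neg one) Dsq b c a -> Dt mul (neg one) Dsq d e c ->
  exists x, Dt mul (neg one) Dsq b d x /\ Dt mul (neg one) Dsq x e a.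
Proof.
  rewrite !Dt_Dsq; intros h1 h2.
  destruct (add_assocr h2 h1) as [x [hx h]].
  exists x; rewrite !Dt_Dsq; auto.
Qed.

Lemma Dsq_sqr_cancel a b c d e :
  Dsq (mul (mul c c) a) (mul (mul d d) b) e -> Dsq a b e.
Proof.
  unfold Dsq; intro h.
  destruct (add_exists (mul (mul e e) a) (mul (mul e e) b)) as [w hw].
  assert (hew : add (mul (mul e e) a) (mul (mul e e) b) (mul (mul e e) w))
    by add_from (add_mul (mul e e) hw).
  assert (he : add e (mul (mul e e) w) e) by add_from (add_mul_absorb e (mul e w)).
  destruct (add_medial h hew he) as [t [u [ht [hu h']]]].
  assert (t = mul (mul e e) a)
    by (apply (add_absorb (a := _) (b := c)); add_from (addC ht)).
  assert (u = mul (mul e e) b)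
    by (apply (add_absorb (a := _) (b := d)); add_from (addC hu)).
  subst t u; exact h'.
Qed.

Lemma Dsq_mul_eq a b c d e :
  mul a d = mul b d -> mul a e = mul b e -> Dsq d e c -> mul a c = mul b c.
Proof.
  intros had hae hc.
  destruct (sqr_join d e) as [f [hf [hff [hfd hfe]]]].
  assert (hda : mul (mul d d) b = mul (mul d d) a).
  { transitivity (mul d (mul b d)); [mon_eq|]; rewrite <- had; mon_eq. }
  assert (hea : mul (mul e e) b = mul (mul e e) a).
  { transitivity (mul e (mul b e)); [mon_eq|]; rewrite <- hae; mon_eq. }
  assert (hfa : add (mul (mul d d) a) (mul (mul e e) a) (mul f a))
    by add_from (add_mul a hf).
  assert (hfb : add (mul (mul d d) a) (mul (mul e e) a) (mul f b)).
  { rewrite <- hda, <- hea; add_from (add_mul b hf). }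
  pose proof (add_sqr_mul_single hfa hfb) as hab.
  rewrite <- (Dsq_fixed hff hfd hfe hc).
  transitivity (mul (mul f a) c); [mon_eq|]; rewrite hab; mon_eq.
Qed.

Lemma Dt_Dsq_sqr a b c :
  Dsq a b c -> Dt mul (neg one) Dsq (mul (mul c c) a) (mul (mul c c) b) c.
Proof. intro h; apply Dt_Dsq; exact h. Qed.

Lemma Dt_Dsq_opp_eq a b :
  (exists x, Dt mul (neg one) Dsq a (mul (neg one) b) x /\
             Dt mul (neg one) Dsq b (mul (neg one) a) x) -> a = b.
Proof.
  intros [x [h1 h2]]; rewrite Dt_Dsq in h1, h2.
  assert (h2' : add a (mul (neg one) b) (neg x))
    by add_from (addC (add_opp_opp h2)).
  destruct (add_medial h1 h2' (add_opp x)) as [t [u [ht [hu h]]]].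
  apply add_self_eq in ht; apply add_self_eq in hu; subst t u.
  apply opp_unique in h; rewrite <- opp_mul_m1 in h.
  rewrite <- (oppK a), <- h, oppK; reflexivity.
Qed.

Lemma Dsq_sqr a b c : Dsq b c a -> Dsq (mul b b) (mul c c) (mul a a).
Proof.
  intro h.
  destruct (sqr_join b c) as [f [hf [hff [hfb hfc]]]].
  pose proof (Dsq_fixed hff hfb hfc h) as hfa.
  refine (add_congr (add_mul (mul a a) hf) _ _ _); [mon_eq|mon_eq|].
  transitivity (mul (mul f a) a); [mon_eq|]; rewrite hfa; reflexivity.
Qed.

Lemma mul_ternary_semigroup :
  one <> zero -> is_ternary_semigroup mul one zero (neg one).
Proof.
  intro one_neq_zero; constructor.
  - apply (mr_mulA HM).
  - apply (mr_mulC HM).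
  - apply (mr_mul1 HM).
  - exact mul_cube.
  - intro e; pose proof (add_opp one) as h; rewrite e in h.
    apply add_self_eq in h; congruence.
  - exact m1_sqr.
  - apply (mr_mul0 HM).
  - intros x e; pose proof (add_opp x) as h; rewrite opp_mul_m1, <- e in h.
    symmetry; exact (add_self_eq h).
Qed.

Lemma Dsq_real_semigroup :
  one <> zero -> is_real_semigroup mul one zero (neg one) Dsq.
Proof.
  intro one_neq_zero; constructor.
  - exact (mul_ternary_semigroup one_neq_zero).
  - exact Dsq_sym.
  - exact Dsq_refl.
  - exact Dsq_mulr.
  - exact Dt_Dsq_assoc.
  - exact Dsq_sqr_cancel.
  - exact Dsq_mul_eq.
  - exact Dt_Dsq_sqr.
  - exact Dt_Dsq_opp_eq.
  - exact Dsq_sqr.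
Qed.

End RealReduced.

End Multiring.

Theorem theorem6p10 (A : Type) (add : A -> A -> A -> Prop) (mul : A -> A -> A)
    (neg : A -> A) (zero one : A) :
  is_real_reduced_multiring add mul neg zero one ->
  let D := fun a b d => add (mul (mul d d) a) (mul (mul d d) b) d in
  is_real_semigroup mul one zero (neg one) D /\
  (forall a b d, Dt mul (neg one) D a b d <-> add a b d).
Proof.
  intros [HM one_neq_zero mul_cube add_absorb add_sqr_single] D; split.
  - exact (Dsq_real_semigroup HM mul_cube add_absorb add_sqr_single one_neq_zero).
  - exact (Dt_Dsq HM mul_cube add_absorb add_sqr_single).
Qed.
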